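(* Let $q \geq 1$ and let $k$ be a positive integer with $k < n$. Let $\boldsymbol{B}$ be a dictionary as described in the context, and assume that every signal $\boldsymbol{y}\in\mathbb{R}^D$ that admits a $k$-block-sparse representation admits a unique one. If $$(2k-1)\,\mu_S < \frac{1-\epsilon'_q}{1+\epsilon'_q},$$ then for every $\Lambda_k\subseteq\{1,\dots,n\}$ with $|\Lambda_k|=k$ and every $\boldsymbol{y}\in\bigoplus_{i\in\Lambda_k}\mathcal{S}_i$, every optimal solution $\boldsymbol{c}^*$ of $P'_{\ell_q/\ell_1}(\boldsymbol{y})$ satisfies $\boldsymbol{B}[i]\boldsymbol{c}^*[i]=\boldsymbol{0}$ for all $i\notin\Lambda_k$; i.e. the solution of $P'_{\ell_q/\ell_1}$ is equivalent to that of $P'_{\ell_q/\ell_0}$.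
   Context: $\boldsymbol{B} = [\boldsymbol{B}[1]\ \cdots\ \boldsymbol{B}[n]] \in \mathbb{R}^{D\times N}$ has unit-Euclidean-norm columns, blocks $\boldsymbol{B}[i] \in \mathbb{R}^{D\times m_i}$ (possibly with linearly dependent columns); $\mathcal{S}_i = \operatorname{span}(\boldsymbol{B}[i])$, and $\mathcal{S}_i\cap\mathcal{S}_j = \{0\}$ for $i\ne j$. Vectors $\boldsymbol{c}\in\mathbb{R}^N$ are written $(\boldsymbol{c}[1];\dots;\boldsymbol{c}[n])$, $\boldsymbol{c}[i]\in\mathbb{R}^{m_i}$. A $k$-block-sparse representation of $\boldsymbol{y}$ is $\boldsymbol{y}=\sum_{i\in\Lambda}\boldsymbol{s}_i$ with $|\Lambda|\le k$, $\boldsymbol{s}_i\in\mathcal{S}_i\setminus\{0\}$; uniqueness means any two have the same $\Lambda$ and the same $\boldsymbol{s}_i$. $P'_{\ell_q/\ell_1}(\boldsymbol{y})$: $\min\sum_i\|\boldsymbol{B}[i]\boldsymbol{c}[i]\|_q$ s.t. $\boldsymbol{y}=\boldsymbol{B}\boldsymbol{c}$; $P'_{\ell_q/\ell_0}(\boldsymbol{y})$: minimize $\#\{i:\boldsymbol{B}[i]\boldsymbol{c}[i]\ne 0\}$ s.t. $\boldsymbol{y}=\boldsymbol{B}\boldsymbol{c}$. Subspace coherence: $\mu(\mathcal{S}_i,\mathcal{S}_j)=\max_{0\ne\boldsymbol{x}\in\mathcal{S}_i,\,0\ne\boldsymbol{z}\in\mathcal{S}_j}\frac{|\boldsymbol{x}^\top\boldsymbol{z}|}{\|\boldsymbol{x}\|_2\|\boldsymbol{z}\|_2}$;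 $\mu_S=\max_{i\ne j}\mu(\mathcal{S}_i,\mathcal{S}_j)$. $\epsilon'_q$: the smallest constant such that $(1-\epsilon'_q)\|\boldsymbol{B}[i]\boldsymbol{c}[i]\|_q^2\le\|\boldsymbol{B}[i]\boldsymbol{c}[i]\|_2^2\le(1+\epsilon'_q)\|\boldsymbol{B}[i]\boldsymbol{c}[i]\|_q^2$ for all $i$ and all $\boldsymbol{c}[i]$. *)

From HB Require Import structures.
From mathcomp Require Import all_boot all_order all_algebra.
From mathcomp Require Import all_classical all_reals.
From mathcomp Require Import exp.
Set Implicit Arguments. Unset Strict Implicit. Unset Printing Implicit Defensive.
Import Order.TTheory GRing.Theory Num.Theory.
Local Open Scope ring_scope.
Local Open Scope classical_set_scope.

Section BlockDefs.
Variable R : realType.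

Definition l2norm (D : nat) (v : 'cV[R]_D) : R :=
  Num.sqrt (\sum_(j < D) v j 0 ^+ 2).

Definition lqnorm (q : R) (D : nat) (v : 'cV[R]_D) : R :=
  (\sum_(j < D) `|v j 0| `^ q) `^ q^-1.

Definition in_span (D m : nat) (M : 'M[R]_(D, m)) (x : 'cV[R]_D) : Prop :=
  exists c : 'cV[R]_m, x = M *m c.

Definition subspace_coherence (D mi mj : nat)
  (Bi : 'M[R]_(D, mi)) (Bj : 'M[R]_(D, mj)) : R :=
  sup [set r : R | exists (x z : 'cV[R]_D),
        [/\ in_span Bi x, in_span Bj z, x != 0, z != 0 &
            r = `|(x^T *m z) 0 0| / (l2norm x * l2norm z)]].

Definition muS (D n : nat) (m : 'I_n -> nat) (B : forall i, 'M[R]_(D, m i)) : R :=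
  \big[Num.max/0]_(ij : 'I_n * 'I_n | ij.1 != ij.2)
     subspace_coherence (B ij.1) (B ij.2).

Definition eps_q (q : R) (D n : nat) (m : 'I_n -> nat)
  (B : forall i, 'M[R]_(D, m i)) : R :=
  inf [set e : R | forall (i : 'I_n) (ci : 'cV[R]_(m i)),
        (1 - e) * lqnorm q (B i *m ci) ^+ 2 <= l2norm (B i *m ci) ^+ 2 /\
        l2norm (B i *m ci) ^+ 2 <= (1 + e) * lqnorm q (B i *m ci) ^+ 2].

Definition kbs_rep (D n : nat) (m : 'I_n -> nat) (B : forall i, 'M[R]_(D, m i))
  (k : nat) (y : 'cV[R]_D) (Lam : {set 'I_n}) (s : 'I_n -> 'cV[R]_D) : Prop :=
  [/\ (#|Lam| <= k)%N,
      (forall i, i \in Lam -> in_span (B i) (s i) /\ s i != 0) &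
      y = \sum_(i in Lam) s i].

Definition kbs_unique (D n : nat) (m : 'I_n -> nat) (B : forall i, 'M[R]_(D, m i))
  (k : nat) : Prop :=
  forall (y : 'cV[R]_D) Lam s Lam' s',
    kbs_rep B k y Lam s -> kbs_rep B k y Lam' s' ->
    Lam = Lam' /\ (forall i, i \in Lam -> s i = s' i).

Definition in_block_sum (D n : nat) (m : 'I_n -> nat) (B : forall i, 'M[R]_(D, m i))
  (Lam : {set 'I_n}) (y : 'cV[R]_D) : Prop :=
  exists s : 'I_n -> 'cV[R]_D,
    (forall i, i \in Lam -> in_span (B i) (s i)) /\ y = \sum_(i in Lam) s i.

Definition feasible (D n : nat) (m : 'I_n -> nat) (B : forall i, 'M[R]_(D, m i))
  (y : 'cV[R]_D) (c : forall i, 'cV[R]_(m i)) : Prop :=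
  y = \sum_(i < n) B i *m c i.

Definition lq_l1_obj (q : R) (D n : nat) (m : 'I_n -> nat)
  (B : forall i, 'M[R]_(D, m i)) (c : forall i, 'cV[R]_(m i)) : R :=
  \sum_(i < n) lqnorm q (B i *m c i).

Definition lq_l1_optimal (q : R) (D n : nat) (m : 'I_n -> nat)
  (B : forall i, 'M[R]_(D, m i)) (y : 'cV[R]_D) (c : forall i, 'cV[R]_(m i)) : Prop :=
  feasible B y c /\
  forall c' : forall i, 'cV[R]_(m i), feasible B y c' ->
    lq_l1_obj q B c <= lq_l1_obj q B c'.

End BlockDefs.

From HB Require Import structures.
From mathcomp Require Import all_boot all_order all_algebra.
From mathcomp Require Import all_classical all_reals.
From mathcomp Require Import exp.
From mathcomp Require Import interval_inference convex hoelder.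
From mathcomp Require Import ring lra.
Import Order.TTheory GRing.Theory Num.Theory.
Set Implicit Arguments. Unset Strict Implicit. Unset Printing Implicit Defensive.
Local Open Scope ring_scope.

(* Let c' be a representation of y supported on Lam and d_i = B[i] (c[i] - c'[i]).
   The d_i lie in the S_i and sum to zero, so pairing d_i with that zero sum and
   bounding the cross terms by coherence gives (1 + mu) |d_i|_2 <= mu sum_j |d_j|_2;
   summed over Lam, the on-support l2 mass is at most k mu times the total mass.
   Optimality of c gives sum_{i \notin Lam} |d_i|_q <= sum_{i \in Lam} |d_i|_q, and
   eps'_q converts between the block lq and l2 norms.  When
   (2k - 1) mu < (1 - eps) / (1 + eps) these inequalities leave no room for a nonzero
   off-support block, and d_i = B[i] c[i] for i \notin Lam. *)

Section RealFacts.
Variable R : realType.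
Implicit Types (a b e q t x y : R).

Lemma powRK a q : 0 <= a -> 0 < q -> (a `^ q) `^ q^-1 = a.
Proof. by move=> a0 q0; rewrite -powRrM mulfV ?gt_eqF // powRr1. Qed.

Lemma powRVK a q : 0 <= a -> 0 < q -> (a `^ q^-1) `^ q = a.
Proof. by move=> a0 q0; rewrite -powRrM mulVf ?gt_eqF // powRr1. Qed.

Lemma powR_convex_comb q t a b : 1 <= q -> 0 <= t <= 1 -> 0 <= a -> 0 <= b ->
  (t * a + (1 - t) * b) `^ q <= t * a `^ q + (1 - t) * b `^ q.
Proof.
move=> q1 /andP[t0 t1] a0 b0.
have := @convex_powR R q q1 (Itv01 t0 t1) a b.
by rewrite !convRE /=; apply; rewrite inE /= in_itv /= andbT.
Qed.

Lemma sqrtr_mul_le t x y : 0 <= x -> 0 <= y -> t * x ^+ 2 <= y ^+ 2 ->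
  Num.sqrt t * x <= y.
Proof.
move=> x0 y0 le_txy; have [t_lt0|t_ge0] := ltrP t 0.
  by rewrite ltr0_sqrtr // mul0r.
rewrite -[x]ger0_norm // -sqrtr_sqr -sqrtrM // -[y]ger0_norm // -sqrtr_sqr.
exact: ler_wsqrtr.
Qed.

Lemma le_sqrtr_mul t x y : 0 <= t -> 0 <= x -> y ^+ 2 <= t * x ^+ 2 ->
  y <= Num.sqrt t * x.
Proof.
move=> t0 x0 le_ytx; apply: le_trans (ler_norm y) _.
by rewrite -sqrtr_sqr -[x]ger0_norm // -sqrtr_sqr -sqrtrM // ler_wsqrtr.
Qed.

Local Open Scope classical_set_scope.

Lemma inf_sandwich (S : set R) x y : S !=set0 -> 0 <= x ->
  (forall e, S e -> (1 - e) * x <= y /\ y <= (1 + e) * x) ->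
  (1 - inf S) * x <= y /\ y <= (1 + inf S) * x.
Proof.
move=> S0 x0 hS; have [x_eq0|x_neq0] := eqVneq x 0.
  by case: S0 => e /hS; rewrite x_eq0 !mulr0.
have x_gt0 : 0 < x by rewrite lt_def x_neq0.
split; rewrite leNgt; apply/negP => lt_inf.
- rewrite -ltr_pdivrMr // in lt_inf.
  have [e Se lt_e] : exists2 e, S e & e < 1 - y / x by apply: inf_lt => //; lra.
  have [+ _] := hS e Se; rewrite leNgt -ltr_pdivrMr //; apply/negP; lra.
- rewrite -ltr_pdivlMr // in lt_inf.
  have [e Se lt_e] : exists2 e, S e & e < y / x - 1 by apply: inf_lt => //; lra.
  have [_] := hS e Se; rewrite leNgt -ltr_pdivlMr //; apply/negP; lra.
Qed.

End RealFacts.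

Section VectorNorms.
Variables (R : realType) (D : nat).
Implicit Types (q : R) (u v x z : 'cV[R]_D).

Definition dotv x z : R := (x^T *m z) 0 0.

Lemma dotvE x z : dotv x z = \sum_(j < D) x j 0 * z j 0.
Proof. by rewrite /dotv mxE; apply: eq_bigr => j _; rewrite mxE. Qed.

Lemma dotv_sumr (I : finType) (P : pred I) x (F : I -> 'cV[R]_D) :
  dotv x (\sum_(i | P i) F i) = \sum_(i | P i) dotv x (F i).
Proof. by rewrite /dotv mulmx_sumr summxE. Qed.

Lemma l2norm_ge0 v : 0 <= l2norm v.
Proof. exact: sqrtr_ge0. Qed.

Lemma l2normE v : l2norm v = Num.sqrt (dotv v v).
Proof. by rewrite dotvE; congr Num.sqrt; apply: eq_bigr => j _; rewrite expr2. Qed.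

Lemma dotvv_ge0 v : 0 <= dotv v v.
Proof. by rewrite dotvE; apply: sumr_ge0 => j _; rewrite -expr2 sqr_ge0. Qed.

Lemma l2norm_sqr v : l2norm v ^+ 2 = dotv v v.
Proof. by rewrite l2normE sqr_sqrtr ?dotvv_ge0. Qed.

Lemma l2norm0 : l2norm (0 : 'cV[R]_D) = 0.
Proof. by rewrite /l2norm big1 ?sqrtr0 // => j _; rewrite mxE expr0n. Qed.

Lemma l2norm_eq0 v : l2norm v = 0 -> v = 0.
Proof.
move=> /eqP; rewrite sqrtr_eq0 => v_le0.
have sum0 : \sum_(j < D) v j 0 ^+ 2 = 0
  by apply/eqP; rewrite eq_le v_le0 sumr_ge0 // => i _; apply: sqr_ge0.
apply/matrixP => j k; rewrite (ord1 k) mxE.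
by apply/eqP; rewrite -sqrf_eq0; apply/eqP/(psumr_eq0P _ sum0) => // i _; apply: sqr_ge0.
Qed.

Lemma l2norm_gt0 v : v != 0 -> 0 < l2norm v.
Proof.
by move=> v0; rewrite lt_def l2norm_ge0 andbT; apply: contraNneq v0 => /l2norm_eq0 ->.
Qed.

Lemma dotv_cauchy_schwarz x z : `|dotv x z| <= l2norm x * l2norm z.
Proof.
have [->|x0] := eqVneq x 0.
  by rewrite dotvE big1 ?normr0 ?mulr_ge0 ?l2norm_ge0 // => j _; rewrite mxE mul0r.
set a := dotv x x; set s := dotv x z.
have a_gt0 : 0 < a by rewrite /a -l2norm_sqr exprn_gt0 ?l2norm_gt0.
have : 0 <= a * (a * dotv z z - s ^+ 2).
  have -> : a * (a * dotv z z - s ^+ 2) = \sum_(j < D) (a * z j 0 - s * x j 0) ^+ 2.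
    transitivity (\sum_(j < D) (a ^+ 2 * (z j 0 * z j 0) - (2 * a * s) * (x j 0 * z j 0)
                                + s ^+ 2 * (x j 0 * x j 0))).
      by rewrite big_split sumrB /= -!mulr_sumr -!dotvE -/a -/s; ring.
    by apply: eq_bigr => j _; ring.
  by apply: sumr_ge0 => j _; apply: sqr_ge0.
rewrite pmulr_rge0 // subr_ge0 => cs.
by rewrite !l2normE -sqrtrM ?dotvv_ge0 // -sqrtr_sqr ler_wsqrtr.
Qed.

Lemma lqnorm_ge0 q v : 0 <= lqnorm q v.
Proof. exact: powR_ge0. Qed.

Lemma powR_lqnorm q v : 0 < q -> lqnorm q v `^ q = \sum_(j < D) `|v j 0| `^ q.
Proof. by move=> q0; rewrite powRVK // sumr_ge0 // => j _; apply: powR_ge0. Qed.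

Lemma lqnorm0 q : 0 < q -> lqnorm q (0 : 'cV[R]_D) = 0.
Proof.
move=> q0; rewrite /lqnorm big1 => [|j _]; last by rewrite mxE normr0 powR0 ?gt_eqF.
by rewrite powR0 // invr_neq0 ?gt_eqF.
Qed.

Lemma lqnormN q v : lqnorm q (- v) = lqnorm q v.
Proof. by rewrite /lqnorm; under eq_bigr do rewrite mxE normrN. Qed.

Lemma ler_coord_lqnorm q v j : 0 < q -> `|v j 0| <= lqnorm q v.
Proof.
move=> q0; rewrite /lqnorm -{1}(@powRK _ `|v j 0| q) //.
have sum_ge0 : 0 <= \sum_(i < D) `|v i 0| `^ q by rewrite sumr_ge0 // => i _; apply: powR_ge0.
apply: ge0_ler_powR; rewrite ?nnegrE ?invr_ge0 ?(ltW q0) ?powR_ge0 //.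
by rewrite (bigD1 j) //= lerDl sumr_ge0 // => i _; apply: powR_ge0.
Qed.

Lemma lqnorm_eq0 q v : 0 < q -> lqnorm q v = 0 -> v = 0.
Proof.
move=> q0 v0; apply/matrixP => j k; rewrite (ord1 k) mxE.
by apply/normr0_eq0/eqP; rewrite eq_le normr_ge0 andbT -v0 ler_coord_lqnorm.
Qed.

Lemma l2norm_sqr_le_lqnorm q v : 0 < q -> l2norm v ^+ 2 <= D%:R * lqnorm q v ^+ 2.
Proof.
move=> q0; rewrite /l2norm sqr_sqrtr ?sumr_ge0 // => [|j _]; last exact: sqr_ge0.
rewrite -[X in X%:R]card_ord mulr_natl -sumr_const; apply: ler_sum => j _.
by rewrite -real_normK ?num_real // ler_sqr ?nnegrE ?normr_ge0 ?lqnorm_ge0 ?ler_coord_lqnorm.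
Qed.

Lemma sum_powR_div_lqnorm q v : 0 < q -> 0 < lqnorm q v ->
  \sum_(j < D) (`|v j 0| / lqnorm q v) `^ q = 1.
Proof.
move=> q0 v0; have vq0 : 0 < lqnorm q v `^ q by apply: powR_gt0.
rewrite -(divff (lt0r_neq0 vq0)) {1}powR_lqnorm // mulr_suml; apply: eq_bigr => j _.
rewrite powRM ?normr_ge0 ?invr_ge0 ?(ltW v0) //.
by rewrite -[(lqnorm q v)^-1]powR_inv1 ?(ltW v0) // -powRrM mulN1r powRN.
Qed.

(* Minkowski: write u + v as a convex combination of u / |u|_q and v / |v|_q. *)
Lemma lqnormD q u v : 1 <= q -> lqnorm q (u + v) <= lqnorm q u + lqnorm q v.
Proof.
move=> q1; have q0 : 0 < q := lt_le_trans ltr01 q1.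
have [u0|u_neq0] := eqVneq (lqnorm q u) 0.
  by rewrite u0 add0r (lqnorm_eq0 q0 u0) add0r.
have [v0|v_neq0] := eqVneq (lqnorm q v) 0.
  by rewrite v0 addr0 (lqnorm_eq0 q0 v0) addr0.
have u_gt0 : 0 < lqnorm q u by rewrite lt_def u_neq0 lqnorm_ge0.
have v_gt0 : 0 < lqnorm q v by rewrite lt_def v_neq0 lqnorm_ge0.
have sumu := sum_powR_div_lqnorm q0 u_gt0; have sumv := sum_powR_div_lqnorm q0 v_gt0.
move: (lqnorm q u) (lqnorm q v) sumu sumv u_gt0 v_gt0 => A B sumu sumv A_gt0 B_gt0.
have AB_gt0 : 0 < A + B by rewrite addr_gt0.
set t := A / (A + B).
have t01 : 0 <= t <= 1.
  by rewrite divr_ge0 ?(ltW A_gt0) ?(ltW AB_gt0) //= ler_pdivrMr // mul1r lerDl (ltW B_gt0).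
have onemt_ge0 : 0 <= 1 - t by rewrite subr_ge0; case/andP: t01.
have coordD j : `|(u + v) j 0| `^ q <=
    (A + B) `^ q * (t * (`|u j 0| / A) `^ q + (1 - t) * (`|v j 0| / B) `^ q).
  have uA0 : 0 <= `|u j 0| / A by rewrite divr_ge0 ?normr_ge0 ?(ltW A_gt0).
  have vB0 : 0 <= `|v j 0| / B by rewrite divr_ge0 ?normr_ge0 ?(ltW B_gt0).
  have comb : `|u j 0| + `|v j 0| =
      (A + B) * (t * (`|u j 0| / A) + (1 - t) * (`|v j 0| / B)).
    by rewrite /t; field; rewrite !lt0r_neq0.
  apply: (@le_trans _ _ ((`|u j 0| + `|v j 0|) `^ q)).
    by rewrite ge0_ler_powR ?nnegrE ?addr_ge0 ?normr_ge0 ?(ltW q0) // mxE ler_normD.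
  rewrite comb powRM ?(ltW AB_gt0) //; last first.
    by rewrite addr_ge0 // mulr_ge0 //; case/andP: t01.
  by rewrite ler_wpM2l ?powR_ge0 // powR_convex_comb.
have sum_le : \sum_(j < D) `|(u + v) j 0| `^ q <= (A + B) `^ q.
  apply: le_trans (ler_sum _ (fun j _ => coordD j)) _.
  by rewrite -mulr_sumr big_split /= -!mulr_sumr sumu sumv !mulr1 subrKC mulr1.
rewrite -(powRK (ltW AB_gt0) q0) /lqnorm.
rewrite ge0_ler_powR ?nnegrE ?invr_ge0 ?(ltW q0) ?powR_ge0 //.
by rewrite sumr_ge0 // => j _; apply: powR_ge0.
Qed.

End VectorNorms.

Section BlockDictionary.
Variables (R : realType) (D n : nat) (m : 'I_n -> nat).
Variable B : forall i : 'I_n, 'M[R]_(D, m i).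
Implicit Types (x z : 'cV[R]_D) (q : R).

Lemma muS_ge0 : 0 <= muS B.
Proof. exact: bigmax_ge_id. Qed.

Lemma subspace_coherence_le_muS i j : i != j ->
  subspace_coherence (B i) (B j) <= muS B.
Proof.
move=> ij; exact: (@le_bigmax_cond _ _ _ 0 (i, j) (fun ij : 'I_n * 'I_n => ij.1 != ij.2)
  (fun ij => subspace_coherence (B ij.1) (B ij.2))).
Qed.

Lemma dotv_le_subspace_coherence i j x z : in_span (B i) x -> in_span (B j) z ->
  `|dotv x z| <= subspace_coherence (B i) (B j) * l2norm x * l2norm z.
Proof.
move=> hx hz.
have [->|x0] := eqVneq x 0.
  by apply: le_trans (dotv_cauchy_schwarz _ _) _; rewrite l2norm0 !(mulr0, mul0r).
have [->|z0] := eqVneq z 0.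
  by apply: le_trans (dotv_cauchy_schwarz _ _) _; rewrite l2norm0 !(mulr0, mul0r).
have xz_gt0 : 0 < l2norm x * l2norm z by rewrite mulr_gt0 ?l2norm_gt0.
rewrite -mulrA -ler_pdivrMr //; apply: ub_le_sup; last by exists x, z.
exists 1 => _ [x' [z' [_ _ x'0 z'0 ->]]].
by rewrite ler_pdivrMr ?mul1r ?mulr_gt0 ?l2norm_gt0 // dotv_cauchy_schwarz.
Qed.

Lemma dotv_le_muS i j x z : i != j -> in_span (B i) x -> in_span (B j) z ->
  `|dotv x z| <= muS B * l2norm x * l2norm z.
Proof.
move=> ij hx hz; apply: le_trans (dotv_le_subspace_coherence hx hz) _.
by rewrite -!mulrA ler_wpM2r ?mulr_ge0 ?l2norm_ge0 ?subspace_coherence_le_muS.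
Qed.

Lemma coherent_block_bound (d : 'I_n -> 'cV[R]_D) :
  (forall i, in_span (B i) (d i)) -> \sum_i d i = 0 ->
  forall i, (1 + muS B) * l2norm (d i) <= muS B * \sum_j l2norm (d j).
Proof.
move=> d_span d_sum0 i; rewrite (bigD1 i) //=.
set T := \sum_(j | j != i) l2norm (d j).
have T0 : 0 <= T by rewrite sumr_ge0 // => j _; apply: l2norm_ge0.
have di_sqr : l2norm (d i) ^+ 2 <= muS B * l2norm (d i) * T.
  have : dotv (d i) (\sum_j d j) = 0 by rewrite d_sum0 /dotv mulmx0 mxE.
  rewrite dotv_sumr (bigD1 i) //= -l2norm_sqr => /eqP; rewrite addr_eq0 => /eqP ->.
  apply: le_trans (ler_norm _) _; rewrite normrN mulr_sumr.
  apply: le_trans (ler_norm_sum _ _ _) _; apply: ler_sum => j ji.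
  by apply: dotv_le_muS; rewrite // eq_sym.
have := l2norm_ge0 (d i); have := mulr_ge0 muS_ge0 T0; have := muS_ge0; nra.
Qed.

Lemma sum_coherent_block_bound (d : 'I_n -> 'cV[R]_D) (Lam : {set 'I_n}) :
  (forall i, in_span (B i) (d i)) -> \sum_i d i = 0 ->
  (1 + muS B) * \sum_(i in Lam) l2norm (d i) <=
    #|Lam|%:R * muS B * \sum_j l2norm (d j).
Proof.
move=> d_span d_sum0; rewrite mulr_sumr -mulrA mulr_natl -sumr_const.
by apply: ler_sum => i _; apply: coherent_block_bound.
Qed.

Lemma eps_q_bounds q i (ci : 'cV[R]_(m i)) : 0 < q ->
  (1 - eps_q q B) * lqnorm q (B i *m ci) ^+ 2 <= l2norm (B i *m ci) ^+ 2 /\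
  l2norm (B i *m ci) ^+ 2 <= (1 + eps_q q B) * lqnorm q (B i *m ci) ^+ 2.
Proof.
move=> q0; apply: inf_sandwich; [|exact: sqr_ge0|by move=> e; apply].
(* D + 1 is admissible because |v|_2^2 <= D |v|_q^2 *)
exists (D%:R + 1) => j cj; have := l2norm_sqr_le_lqnorm (B j *m cj) q0.
have := sqr_ge0 (lqnorm q (B j *m cj)); have := sqr_ge0 (l2norm (B j *m cj)).
have : 0 <= D%:R :> R by [].
split; nra.
Qed.

Lemma eps_q_ge0 q i (ci : 'cV[R]_(m i)) : 0 < q -> B i *m ci != 0 -> 0 <= eps_q q B.
Proof.
move=> q0 nz; have [lo hi] := eps_q_bounds ci q0.
have : 0 < lqnorm q (B i *m ci) ^+ 2.
  by rewrite exprn_gt0 // lt_def lqnorm_ge0 andbT; exact: contra_neq (lqnorm_eq0 q0) nz.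
nra.
Qed.

Lemma eps_q_sum_bounds q (c : forall i, 'cV[R]_(m i)) (P : pred 'I_n) :
  0 < q -> 0 <= eps_q q B ->
  Num.sqrt (1 - eps_q q B) * \sum_(i | P i) lqnorm q (B i *m c i)
    <= \sum_(i | P i) l2norm (B i *m c i) /\
  \sum_(i | P i) l2norm (B i *m c i)
    <= Num.sqrt (1 + eps_q q B) * \sum_(i | P i) lqnorm q (B i *m c i).
Proof.
move=> q0 e0; rewrite !mulr_sumr; split; apply: ler_sum => i _.
  have [lo _] := eps_q_bounds (c i) q0.
  by apply: sqrtr_mul_le; rewrite ?lqnorm_ge0 ?l2norm_ge0.
have [_ hi] := eps_q_bounds (c i) q0.
by apply: le_sqrtr_mul; rewrite ?lqnorm_ge0 // addr_ge0.
Qed.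

Lemma in_block_sum_feasible (Lam : {set 'I_n}) y : in_block_sum B Lam y ->
  exists c' : forall i, 'cV[R]_(m i),
    feasible B y c' /\ forall i, i \notin Lam -> B i *m c' i = 0.
Proof.
case=> s [s_span ->].
have w_ex i : exists w : 'cV[R]_(m i), i \in Lam -> s i = B i *m w.
  by case: (boolP (i \in Lam)) => [/s_span [w ->]|_]; [exists w | exists 0].
pose w i := projT1 (cid (w_ex i)).
have wP i : i \in Lam -> s i = B i *m w i := projT2 (cid (w_ex i)).
exists (fun i => if i \in Lam then w i else 0).
split=> [|i /negbTE ->]; last by rewrite mulmx0.
rewrite /feasible [RHS](bigID (fun i => i \in Lam)) /= [X in _ = _ + X]big1 ?addr0.
  by apply: eq_bigr => i iL; rewrite iL -wP.
by move=> i /negbTE ->; rewrite mulmx0.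
Qed.

Lemma feasible_subr_sum0 y (c c' : forall i, 'cV[R]_(m i)) :
  feasible B y c -> feasible B y c' -> \sum_i B i *m (c i - c' i) = 0.
Proof. by move=> fc fc'; under eq_bigr do rewrite mulmxBr; rewrite sumrB -fc -fc' subrr. Qed.

Lemma lq_l1_optimal_tail_le q y (c c' : forall i, 'cV[R]_(m i)) (Lam : {set 'I_n}) :
  1 <= q -> lq_l1_optimal q B y c -> feasible B y c' ->
  (forall i, i \notin Lam -> B i *m c' i = 0) ->
  \sum_(i < n | i \notin Lam) lqnorm q (B i *m (c i - c' i))
    <= \sum_(i in Lam) lqnorm q (B i *m (c i - c' i)).
Proof.
move=> q1 [_ c_min] c'_feas c'_tail; have q0 : 0 < q := lt_le_trans ltr01 q1.
have := c_min c' c'_feas; rewrite /lq_l1_obj.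
rewrite [X in X <= _ -> _](bigID (fun i => i \in Lam)).
rewrite [X in _ <= X -> _](bigID (fun i => i \in Lam)) /=.
rewrite [X in _ <= _ + X]big1 => [|i /c'_tail ->]; last exact: lqnorm0.
have tailE : \sum_(i < n | i \notin Lam) lqnorm q (B i *m c i) =
             \sum_(i < n | i \notin Lam) lqnorm q (B i *m (c i - c' i)).
  by apply: eq_bigr => i /c'_tail; rewrite mulmxBr => ->; rewrite subr0.
have triangle : \sum_(i in Lam) lqnorm q (B i *m c' i) <=
    \sum_(i in Lam) lqnorm q (B i *m c i) + \sum_(i in Lam) lqnorm q (B i *m (c i - c' i)).
  rewrite -big_split /=; apply: ler_sum => i _.
  have -> : B i *m c' i = B i *m c i + - (B i *m (c i - c' i)).
    by rewrite mulmxBr opprB addrC subrK.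
  by rewrite -(lqnormN q (B i *m (c i - c' i))) lqnormD.
rewrite [X in _ <= X -> _]addr0 => le_obj; have := le_trans le_obj triangle.
by rewrite lerD2l -[X in _ -> X <= _]tailE.
Qed.

End BlockDictionary.

(* With a = (K - 1) mu and b = K mu, a positive SC yields
   (1 - a) sqrt(1 - e) <= b sqrt(1 + e), hence 1 - e <= (a + b) (1 + e). *)
Lemma coherence_tail_le0 (R : realType) (K mu e SL SC PL PC : R) :
  1 <= K -> 0 <= mu -> 0 <= e ->
  (2 * K - 1) * mu < (1 - e) / (1 + e) ->
  (1 + mu) * SL <= K * mu * (SL + SC) -> PC <= PL ->
  Num.sqrt (1 - e) * PL <= SL -> SC <= Num.sqrt (1 + e) * PC -> SC <= 0.
Proof.
move=> K1 mu0 e0 hcoh HS HP HL HC; rewrite leNgt; apply/negP => SC_gt0.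
have e1 : 0 < 1 + e by lra.
rewrite ltr_pdivlMr // in hcoh.
set a := (K - 1) * mu; set b := K * mu.
have a0 : 0 <= a by rewrite mulr_ge0 // subr_ge0.
have b0 : 0 <= b by rewrite mulr_ge0 //; lra.
have ab : (2 * K - 1) * mu = a + b by rewrite /a /b; ring.
rewrite ab in hcoh.
have [a_gt1|a_le1] := ltrP 1 a.
  have : 0 < (a - 1) * (1 + e) by rewrite mulr_gt0 // subr_gt0.
  by have := mulr_ge0 b0 (ltW e1); nra.
set al := Num.sqrt (1 - e); set be := Num.sqrt (1 + e).
have al2 : al ^+ 2 = 1 - e by rewrite sqr_sqrtr //; nra.
have be2 : be ^+ 2 = 1 + e by rewrite sqr_sqrtr // ltW.
have al_gt0 : 0 < al by rewrite sqrtr_gt0; nra.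
have al_le_be : al <= be by rewrite ler_wsqrtr //; lra.
have be_gt0 : 0 < be by rewrite sqrtr_gt0.
have PC_gt0 : 0 < PC by rewrite -(pmulr_rgt0 _ be_gt0) (lt_le_trans SC_gt0 HC).
have HS' : (1 - a) * SL <= b * SC by rewrite /a /b; nra.
have : (1 - a) * al * PL <= b * be * PL.
  apply: le_trans (_ : b * SC <= _).
    by apply: le_trans HS'; rewrite -mulrA ler_wpM2l // subr_ge0.
  rewrite -mulrA ler_wpM2l //; apply: le_trans HC _.
  by rewrite ler_wpM2l // ltW.
rewrite ler_pM2r; last exact: lt_le_trans HP.
move=> alb; have : (1 - a) * al ^+ 2 <= b * be ^+ 2.
  rewrite !expr2 !mulrA; apply: le_trans (ler_wpM2r (ltW al_gt0) alb) _.
  by rewrite ler_wpM2l // mulr_ge0 // ltW.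
rewrite al2 be2; nra.
Qed.

Unset Implicit Arguments.

Theorem corollary3 (R : realType) (D n : nat) (m : 'I_n -> nat)
  (B : forall i : 'I_n, 'M[R]_(D, m i)) (q : R) (k : nat)
  (hq : 1 <= q) (hk0 : (0 < k)%N) (hkn : (k < n)%N)
  (hunit : forall (i : 'I_n) (j : 'I_(m i)), l2norm (col j (B i)) = 1)
  (hdisj : forall (i j : 'I_n) (x : 'cV[R]_D), i != j ->
             in_span (B i) x -> in_span (B j) x -> x = 0)
  (huniq : kbs_unique B k)
  (hcoh : (2 * k - 1)%:R * muS B < (1 - eps_q q B) / (1 + eps_q q B)) :
  forall (Lam : {set 'I_n}) (y : 'cV[R]_D),
    #|Lam| = k -> in_block_sum B Lam y ->
    forall c : forall i : 'I_n, 'cV[R]_(m i),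
      lq_l1_optimal q B y c ->
      forall i : 'I_n, i \notin Lam -> B i *m c i = 0.
Proof.
move=> Lam y card_Lam y_in c c_opt i0 i0_notin.
have q0 : 0 < q := lt_le_trans ltr01 hq.
have [//|nz] := eqVneq (B i0 *m c i0) 0.
have e0 := eps_q_ge0 q0 nz.
have [c' [c'_feas c'_tail]] := in_block_sum_feasible y_in.
pose d i := B i *m (c i - c' i).
have d_tail i : i \notin Lam -> d i = B i *m c i.
  by move=> /c'_tail; rewrite /d mulmxBr => ->; rewrite subr0.
have [inL _] := eps_q_sum_bounds (fun i => c i - c' i) (mem Lam) q0 e0.
have [_ outL] := eps_q_sum_bounds (fun i => c i - c' i) (fun i => i \notin Lam) q0 e0.
have d_span i : in_span (B i) (d i) by exists (c i - c' i).
have := sum_coherent_block_bound Lam d_span (feasible_subr_sum0 c_opt.1 c'_feas).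
rewrite card_Lam [X in _ <= _ * X](bigID (mem Lam)) /= => coh_bound.
have K1 : 1 <= k%:R :> R by rewrite ler1n.
rewrite natrB ?muln_gt0 ?hk0 // natrM in hcoh.
have := coherence_tail_le0 K1 (muS_ge0 B) e0 hcoh coh_bound
  (lq_l1_optimal_tail_le hq c_opt c'_feas c'_tail) inL outL.
move=> tail_le0; have tail0 : \sum_(i < n | i \notin Lam) l2norm (d i) = 0.
  by apply/eqP; rewrite eq_le tail_le0 sumr_ge0 // => i _; apply: l2norm_ge0.
have /l2norm_eq0 := psumr_eq0P (fun i _ => l2norm_ge0 (d i)) tail0 (i:=i0) i0_notin.
by rewrite d_tail.
Qed.
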